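(* For all integers $p \ge 0$ and $n \ge 1$, \[ p! + \sum_{t=0}^{p} \begin{bmatrix} p+1 \\ t+1 \end{bmatrix} S_t(n) = p! \binom{n+p+1}{p+1}. \]
   Context: $S_t(n) = 1^t + 2^t + \cdots + n^t$ for integers $t \ge 0$ (so $S_0(n)=n$). $\begin{bmatrix} m \\ k \end{bmatrix}$ denotes the unsigned Stirling number of the first kind: the number of permutations of $m$ elements with exactly $k$ cycles. *)

From mathcomp Require Import all_boot all_order all_fingroup.
Set Implicit Arguments. Unset Strict Implicit. Unset Printing Implicit Defensive.

Definition powsum (t n : nat) : nat := \sum_(1 <= i < n.+1) i ^ t.

(* Unsigned Stirling number of the first kind [m; k]: the number of
   permutations of m elements ('S_m = {perm 'I_m}) with exactly k cycles
   (porbits s = set of cycles of s, fixed points counted as 1-cycles). *)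
Definition stirling1 (m k : nat) : nat :=
  #|[set s : 'S_m | #|porbits s| == k]|.

(* Cycle counts have the rising factorial x (x + 1) ... (x + m - 1) as generating
   function: a permutation of m + 1 points is a permutation s of m points together
   with the point j swapped with the new point 0, and the swap creates a new cycle
   exactly when j = 0.  Hence sum_t [p+1; t+1] i^t = (i + 1) ... (i + p)
   = p! C(i + p, p), and summing over 1 <= i <= n is the hockey-stick identity. *)
From mathcomp Require Import all_boot all_order all_fingroup.
Set Implicit Arguments. Unset Strict Implicit. Unset Printing Implicit Defensive.

Section LiftPermCycles.
Variables (m : nat) (i : 'I_m.+1) (s : 'S_m).
Local Notation u := (lift_perm i i s).

Lemma lift_permX_lift k x : (u ^+ k)%g (lift i x) = lift i ((s ^+ k)%g x).
Proof.
elim: k => [|k IHk]; first by rewrite !expg0 !perm1.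
by rewrite !expgSr !permM IHk lift_perm_lift.
Qed.

Lemma lift_permX_id k : (u ^+ k)%g i = i.
Proof.
elim: k => [|k IHk]; first by rewrite expg0 perm1.
by rewrite expgSr permM IHk lift_perm_id.
Qed.

Lemma porbit_lift_perm x : porbit u (lift i x) = lift i @: porbit s x.
Proof.
apply/setP => y; apply/porbitP/imsetP => [[k ->]|[z /porbitP[k ->] ->]].
  by exists ((s ^+ k)%g x); rewrite ?mem_porbit ?lift_permX_lift.
by exists k; rewrite lift_permX_lift.
Qed.

Lemma porbit_lift_perm_id : porbit u i = [set i].
Proof.
apply/setP => y; rewrite inE; apply/porbitP/eqP => [[k ->]|->].
  exact: lift_permX_id.
by exists 0; rewrite expg0 perm1.
Qed.

Lemma porbits_lift_perm :
  porbits u = [set i] |: [set lift i @: A | A : {set 'I_m} in porbits s].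
Proof.
apply/setP => B; rewrite !inE; apply/imsetP/orP.
  case=> x _ ->; case: (unliftP i x) => [y ->|->]; last first.
    by left; rewrite porbit_lift_perm_id.
  by right; rewrite porbit_lift_perm; apply: imset_f; apply: imset_f.
case=> [/eqP ->|/imsetP[_ /imsetP[x _ ->] ->]].
  by exists i; rewrite ?porbit_lift_perm_id.
by exists (lift i x); rewrite ?porbit_lift_perm.
Qed.

Lemma card_porbits_lift_perm : #|porbits u| = #|porbits s|.+1.
Proof.
rewrite porbits_lift_perm cardsU1 card_imset; last exact/imset_inj/lift_inj.
suff -> : [set i] \notin [set lift i @: A | A : {set 'I_m} in porbits s] by [].
apply/imsetP => -[A _ /setP/(_ i)]; rewrite inE eqxx.
by move/esym/imsetP => [x _ /eqP]; rewrite (negbTE (neq_lift _ _)).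
Qed.

End LiftPermCycles.

Section InsertPerm.
Variable m : nat.
Local Notation i0 := (@ord0 m).

Definition insert_perm (js : 'I_m.+1 * 'S_m) : 'S_m.+1 :=
  (tperm js.1 i0 * lift_perm i0 i0 js.2)%g.

Lemma insert_perm_inj : injective insert_perm.
Proof.
have insert_perm_j j s : insert_perm (j, s) j = i0.
  by rewrite permM tpermL lift_perm_id.
move=> [j s] [j' s'] E.
have j_eq : j = j'.
  apply: (perm_inj (s := insert_perm (j', s'))).
  by rewrite insert_perm_j -E insert_perm_j.
subst j'; move/mulgI: E => E; congr (_, _); apply/permP => x.
by apply: (@lift_inj _ i0); rewrite -!(lift_perm_lift i0 i0) E.
Qed.

Lemma insert_perm_bij : bijective insert_perm.
Proof.
apply: inj_card_bij; first exact: insert_perm_inj.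
by rewrite card_prod !card_Sn card_ord factS.
Qed.

Lemma card_porbits_insert_perm j s :
  #|porbits (insert_perm (j, s))| = #|porbits s| + (j == i0).
Proof.
rewrite /insert_perm /=; have := porbits_mul_tperm (lift_perm i0 i0 s) j i0.
rewrite porbit_lift_perm_id card_porbits_lift_perm inE.
case: eqP => _ /=; rewrite ?addn0 addn1; first exact.
by rewrite -addn2 => /eqP; rewrite eqn_add2r => /eqP.
Qed.

Lemma sum_pow_card_porbitsS x :
  \sum_(t : 'S_m.+1) x ^ #|porbits t| = (x + m) * \sum_(s : 'S_m) x ^ #|porbits s|.
Proof.
rewrite (reindex insert_perm) /=; last exact/onW_bij/insert_perm_bij.
rewrite -(pair_big xpredT xpredT (fun j s => x ^ #|porbits (insert_perm (j, s))|)).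
rewrite exchange_big big_distrr /=; apply: eq_bigr => s _.
rewrite (bigD1 i0) //= card_porbits_insert_perm eqxx addn1 expnS.
rewrite (eq_bigr (fun _ => x ^ #|porbits s|)); last first.
  by move=> j /negbTE j_neq0; rewrite card_porbits_insert_perm j_neq0 addn0.
by rewrite sum_nat_const cardC1 card_ord mulnDl mulnC.
Qed.

End InsertPerm.

Lemma card_porbits_leq m (s : 'S_m) : #|porbits s| <= m.
Proof. by apply: leq_trans (leq_imset_card _ _) _; rewrite card_ord. Qed.

Lemma sum_pow_card_porbits m x :
  \sum_(s : 'S_m) x ^ #|porbits s| = \prod_(k < m) (x + k).
Proof.
elim: m => [|m IHm].
  rewrite big_ord0 (eq_bigr (fun _ => 1)) ?sum_nat_const ?card_Sn // => s _.
  by have := card_porbits_leq s; rewrite leqn0 => /eqP ->.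
by rewrite sum_pow_card_porbitsS IHm big_ord_recr /= mulnC.
Qed.

Lemma stirling1E m k : stirling1 m k = \sum_(s : 'S_m) (#|porbits s| == k).
Proof.
rewrite /stirling1 -sum1_card big_mkcond /=; apply: eq_bigr => s _.
by rewrite inE; case: eqP.
Qed.

Lemma stirling1_gf m x :
  \sum_(k < m.+1) stirling1 m k * x ^ k = \prod_(k < m) (x + k).
Proof.
rewrite -sum_pow_card_porbits.
under eq_bigr do rewrite stirling1E big_distrl /=.
rewrite exchange_big /=; apply: eq_bigr => s _.
rewrite (bigD1 (Ordinal (card_porbits_leq s : _ < m.+1))) //= eqxx mul1n.
rewrite big1 ?addn0 // => k /eqP k_neq; case: eqP => // eq_k.
by case: k_neq; apply: val_inj; rewrite /= eq_k.
Qed.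

Lemma stirling1S0 m : stirling1 m.+1 0 = 0.
Proof.
apply/eqP; rewrite cards_eq0; apply/eqP/setP => s; rewrite !inE cards_eq0.
by apply/negbTE/set0Pn; exists (porbit s ord0); apply: imset_f.
Qed.

Lemma prod_addS_ffact a p : \prod_(k < p) (a + k.+1) = (a + p) ^_ p.
Proof.
elim: p => [|p IHp]; first by rewrite big_ord0 ffactn0.
by rewrite big_ord_recr IHp /= addnS ffactSS mulnC.
Qed.

Lemma stirling1S_gf p x : 0 < x ->
  \sum_(t < p.+1) stirling1 p.+1 t.+1 * x ^ t = p`! * 'C(x + p, p).
Proof.
move=> x_gt0; apply/eqP; rewrite -(eqn_pmul2l x_gt0) [p`! * _]mulnC bin_ffact.
rewrite -prod_addS_ffact big_distrr /=.
have := stirling1_gf p.+1 x.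
rewrite big_ord_recl stirling1S0 add0n [\prod_(k < _) _]big_ord_recl /= addn0 => <-.
by apply/eqP/eq_bigr => t _; rewrite expnS mulnCA.
Qed.

Lemma hockey_stick n p : \sum_(i < n.+1) 'C(i + p, p) = 'C(n + p.+1, p.+1).
Proof.
elim: n => [|n IHn]; first by rewrite big_ord1 !add0n !binn.
by rewrite big_ord_recr IHn /= !addSn !addnS binS.
Qed.

Theorem mainTheorem5 (p n : nat) (hn : 1 <= n) :
  p`! + \sum_(0 <= t < p.+1) stirling1 p.+1 t.+1 * powsum t n
  = p`! * 'C(n + p + 1, p + 1).
Proof.
rewrite /powsum; under eq_bigr do rewrite big_distrr /=.
rewrite exchange_big /= big_add1 big_mkord.
under eq_bigr => i _ do rewrite big_mkord stirling1S_gf //.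
rewrite -big_distrr -{1}[p`!]muln1 -mulnDr -{1}(binn p).
by rewrite -(big_ord_recl _ (fun i => 'C(i + p, p))) hockey_stick /= addnS !addn1.
Qed.
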